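(* For every $C,\gamma>0$ and every $\alpha$ with $0<\alpha<\frac{1}{2C^{1/\gamma}+1}$ there exists $\varepsilon=\varepsilon(C,\gamma,\alpha)\in(0,1)$ such that the following holds. Let $\mu$ be a $(C,\gamma)$-absolutely decaying measure on $\mathbb{R}^n$ with $K=\operatorname{supp}\mu$, let $0<\rho<\rho_{C,\gamma}(\mu)$, $\mathbf{x}_1\in K$, $N\in\mathbb{N}$, and let $\mathcal L_1,\dots,\mathcal L_N$ be affine hyperplanes in $\mathbb{R}^n$. Then there exists $\mathbf{x}_2\in K$ with $B(\mathbf{x}_2,\alpha\rho)\subset B(\mathbf{x}_1,\rho)$ and $d(B(\mathbf{x}_2,\alpha\rho),\mathcal L_i)>\alpha\rho$ for at least $\lceil\varepsilon N\rceil$ of the indices $i\in\{1,\dots,N\}$.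
   Context: $B(\mathbf{x},\rho)$ is the closed Euclidean ball in $\mathbb{R}^n$, $d$ Euclidean distance (between sets: infimum over pairs of points). A locally finite Borel measure $\mu$ on $\mathbb{R}^n$ is $(C,\gamma)$-absolutely decaying if there is $\rho_0>0$ with $\mu(B(\mathbf{x},\rho)\cap\mathcal L^{(\varepsilon)})<C(\varepsilon/\rho)^\gamma\mu(B(\mathbf{x},\rho))$ for every affine hyperplane $\mathcal L$, every $\mathbf{x}\in\operatorname{supp}\mu$, every $0<\rho<\rho_0$ and every $\varepsilon>0$, where $\mathcal L^{(\varepsilon)}=\{\mathbf{x}: d(\mathbf{x},\mathcal L)\le\varepsilon\}$. $\rho_{C,\gamma}(\mu)$ denotes the supremum of all such $\rho_0$. *)

From Stdlib Require Fin.
From Stdlib Require Import Reals Lra Lia List.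
Open Scope R_scope.

Definition pt (n : nat) := Fin.t n -> R.

Fixpoint fsum (n : nat) : (Fin.t n -> R) -> R :=
  match n return (Fin.t n -> R) -> R with
  | O => fun _ => 0
  | S m => fun f => f Fin.F1 + fsum m (fun i => f (Fin.FS i))
  end.

Definition dot {n} (a x : pt n) : R := fsum n (fun i => a i * x i).

Definition dist {n} (x y : pt n) : R := sqrt (fsum n (fun i => (x i - y i) ^ 2)).

Definition ball {n} (x : pt n) (rho : R) : pt n -> Prop := fun y => dist x y <= rho.

Definition subset {n} (A B : pt n -> Prop) : Prop := forall x, A x -> B x.

Definition is_hyperplane {n} (L : pt n -> Prop) : Prop :=
  exists (a : pt n) (b : R), (exists i, a i <> 0) /\ forall x, L x <-> dot a x = b.

(* d(x, L) <= eps, i.e. inf_{z in L} |x - z| <= eps. *)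
Definition pt_set_dist_le {n} (x : pt n) (L : pt n -> Prop) (eps : R) : Prop :=
  forall s, eps < s -> exists z, L z /\ dist x z < s.

Definition nbhd {n} (L : pt n -> Prop) (eps : R) : pt n -> Prop :=
  fun x => pt_set_dist_le x L eps.

(* d(A, B) > t, i.e. inf_{y in A, z in B} |y - z| > t. *)
Definition set_dist_gt {n} (A B : pt n -> Prop) (t : R) : Prop :=
  exists s, t < s /\ forall y z, A y -> B z -> s <= dist y z.

Definition inter {n} (A B : pt n -> Prop) : pt n -> Prop := fun x => A x /\ B x.

Definition is_open {n} (U : pt n -> Prop) : Prop :=
  forall x, U x -> exists r, 0 < r /\ subset (ball x r) U.

Inductive Borel {n} : (pt n -> Prop) -> Prop :=
  | Borel_open : forall U, is_open U -> Borel U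
  | Borel_compl : forall A, Borel A -> Borel (fun x => ~ A x)
  | Borel_union : forall F : nat -> pt n -> Prop,
      (forall k, Borel (F k)) -> Borel (fun x => exists k, F k x).

Definition bounded {n} (A : pt n -> Prop) : Prop :=
  exists (x0 : pt n) (r : R), forall x, A x -> dist x0 x <= r.

(* A locally finite Borel measure on R^n, represented by its (finite) values
   on bounded Borel sets; values on other sets are irrelevant. *)
Record LFBMeasure (n : nat) := {
  meas :> (pt n -> Prop) -> R;
  meas_nonneg : forall A, Borel A -> bounded A -> 0 <= meas A;
  meas_sigma_add : forall F : nat -> pt n -> Prop,
      (forall k, Borel (F k)) ->
      (forall k l x, k <> l -> F k x -> F l x -> False) ->
      bounded (fun x => exists k, F k x) ->
      infinite_sum (fun k => meas (F k)) (meas (fun x => exists k, F k x))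
}.

Definition in_supp {n} (mu : LFBMeasure n) (x : pt n) : Prop :=
  forall r, 0 < r -> 0 < mu (ball x r).

Definition decay_radius {n} (C gamma : R) (mu : LFBMeasure n) (rho0 : R) : Prop :=
  0 < rho0 /\
  forall (L : pt n -> Prop) (x : pt n) (rho eps : R),
    is_hyperplane L -> in_supp mu x -> 0 < rho -> rho < rho0 -> 0 < eps ->
    mu (inter (ball x rho) (nbhd L eps)) < C * Rpower (eps / rho) gamma * mu (ball x rho).

Definition abs_decaying {n} (C gamma : R) (mu : LFBMeasure n) : Prop :=
  exists rho0, decay_radius C gamma mu rho0.

(* rho < rho_{C,gamma}(mu) = sup of admissible rho0 (possibly +infinity). *)
Definition lt_decay_sup {n} (C gamma : R) (mu : LFBMeasure n) (rho : R) : Prop :=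
  exists rho0, decay_radius C gamma mu rho0 /\ rho < rho0.

From Stdlib Require Import Reals List Lra Lia Psatz.
From Stdlib Require Import Classical ClassicalEpsilon FunctionalExtensionality PropExtensionality.
Open Scope R_scope.

(* Shrink B(x1, rho) to B' = B(x1, (1 - alpha) rho) and thicken each L_i to
   L_i^(t), where 2 alpha rho < t < (1 - alpha) rho / C^(1/gamma).  Absolute
   decay leaves a fraction at least 1 - C (t / ((1 - alpha) rho))^gamma =: eps
   of mu(B') outside each L_i^(t).  A pigeonhole argument for measures gives a
   set of positive measure in B' avoiding more than eps N of the L_i^(t), and
   bisecting a bounding box produces a point x2 of the support adherent to it.
   Then B(x2, alpha rho) lies in B(x1, rho) and keeps distance at least
   t - alpha rho > alpha rho from those L_i. *)

Lemma fsum_le n (f g : Fin.t n -> R) : (forall i, f i <= g i) -> fsum n f <= fsum n g.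
Proof.
  revert f g; induction n as [|n IH]; intros f g H; simpl; [lra|].
  specialize (IH (fun i => f (Fin.FS i)) (fun i => g (Fin.FS i)) (fun i => H (Fin.FS i))).
  specialize (H Fin.F1); lra.
Qed.

Lemma fsum_ext n (f g : Fin.t n -> R) : (forall i, f i = g i) -> fsum n f = fsum n g.
Proof.
  revert f g; induction n as [|n IH]; intros f g H; simpl; [reflexivity|].
  rewrite (H Fin.F1), (IH _ (fun i => g (Fin.FS i))); auto.
Qed.

Lemma fsum_add n (f g : Fin.t n -> R) : fsum n (fun i => f i + g i) = fsum n f + fsum n g.
Proof. revert f g; induction n as [|n IH]; intros f g; simpl; [lra|]. rewrite IH; ring. Qed.

Lemma fsum_scal n (c : R) (f : Fin.t n -> R) : fsum n (fun i => c * f i) = c * fsum n f.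
Proof. revert f; induction n as [|n IH]; intros f; simpl; [lra|]. rewrite IH; ring. Qed.

Lemma fsum_const n c : fsum n (fun _ => c) = INR n * c.
Proof. induction n as [|n IH]; simpl fsum; [simpl; lra|]. rewrite IH, S_INR; ring. Qed.

Lemma fsum_nonneg n (f : Fin.t n -> R) : (forall i, 0 <= f i) -> 0 <= fsum n f.
Proof. intros H. pose proof (fsum_le n (fun _ => 0) f H). rewrite fsum_const in *. lra. Qed.

Lemma fsum_ge_term n (f : Fin.t n -> R) j : (forall i, 0 <= f i) -> f j <= fsum n f.
Proof.
  revert f; induction j as [n|n j IH]; intros f H; simpl.
  - pose proof (fsum_nonneg n (fun i => f (Fin.FS i)) (fun i => H _)); lra.
  - pose proof (IH (fun i => f (Fin.FS i)) (fun i => H _)); pose proof (H Fin.F1); lra.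
Qed.

Lemma fsum_cauchy_schwarz n (a b : Fin.t n -> R) :
  fsum n (fun i => a i * b i) ^ 2 <= fsum n (fun i => a i ^ 2) * fsum n (fun i => b i ^ 2).
Proof.
  set (A := fsum n (fun i => a i ^ 2)); set (B := fsum n (fun i => b i ^ 2));
  set (X := fsum n (fun i => a i * b i)).
  assert (Hquad : forall s, 0 <= A + (-2 * s) * X + s ^ 2 * B).
  { intros s. replace (A + (-2 * s) * X + s ^ 2 * B) with (fsum n (fun i => (a i - s * b i) ^ 2)).
    - apply fsum_nonneg; intros; apply pow2_ge_0.
    - unfold A, X, B. rewrite <- !fsum_scal, <- !fsum_add. apply fsum_ext; intros; ring. }
  assert (HB : 0 <= B) by (apply fsum_nonneg; intros; apply pow2_ge_0).
  destruct (Req_dec B 0) as [HB0|HB0].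
  - destruct (Req_dec X 0) as [HX0|HX0]; [rewrite HX0; nra|].
    specialize (Hquad ((A + 1) / (2 * X))). rewrite HB0 in Hquad.
    replace (A + -2 * ((A + 1) / (2 * X)) * X + ((A + 1) / (2 * X)) ^ 2 * 0) with (-1)
      in Hquad by (field; auto). lra.
  - specialize (Hquad (X / B)).
    replace (A + -2 * (X / B) * X + (X / B) ^ 2 * B) with ((A * B - X ^ 2) / B) in Hquad
      by (field; auto).
    assert (0 <= (A * B - X ^ 2) / B * B) by (apply Rmult_le_pos; lra).
    replace ((A * B - X ^ 2) / B * B) with (A * B - X ^ 2) in * by (field; auto). lra.
Qed.

Lemma Rabs_le_inv a b : Rabs a <= b -> - b <= a <= b.
Proof. intros H. pose proof (Rle_abs a); pose proof (Rle_abs (- a)). rewrite Rabs_Ropp in *. lra. Qed.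

Lemma sqrt_le_of_le_sqr a u : 0 <= u -> a <= u ^ 2 -> sqrt a <= u.
Proof. intros Hu H. rewrite <- (sqrt_pow2 u Hu). apply sqrt_le_1_alt. simpl in *; lra. Qed.

Lemma dist_sym {n} (x y : pt n) : dist x y = dist y x.
Proof. unfold dist. f_equal. apply fsum_ext; intros; ring. Qed.

Lemma Rabs_coord_le_dist {n} (x y : pt n) j : Rabs (x j - y j) <= dist x y.
Proof.
  unfold dist. rewrite <- sqrt_Rsqr_abs. apply sqrt_le_1_alt. unfold Rsqr.
  pose proof (fsum_ge_term n (fun i => (x i - y i) ^ 2) j (fun i => pow2_ge_0 _)). simpl in *; lra.
Qed.

Lemma dist_le_box {n} (x y : pt n) w :
  0 <= w -> (forall j, Rabs (x j - y j) <= w) -> dist x y <= sqrt (INR n) * w.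
Proof.
  intros Hw H. apply sqrt_le_of_le_sqr; [apply Rmult_le_pos; [apply sqrt_pos|lra]|].
  rewrite Rpow_mult_distr, pow2_sqrt by apply pos_INR.
  rewrite <- fsum_const. apply fsum_le. intros i. specialize (H i).
  apply Rabs_le_inv in H. nra.
Qed.

Lemma dist_triangle {n} (x y z : pt n) : dist x z <= dist x y + dist y z.
Proof.
  set (a := fun i => x i - y i); set (b := fun i => y i - z i).
  set (A := fsum n (fun i => a i ^ 2)); set (B := fsum n (fun i => b i ^ 2));
  set (X := fsum n (fun i => a i * b i)).
  assert (E : fsum n (fun i => (x i - z i) ^ 2) = A + 2 * X + B).
  { unfold A, B, X. rewrite <- fsum_scal, <- !fsum_add. apply fsum_ext; intros; unfold a, b; ring. }
  assert (HA : 0 <= A) by (apply fsum_nonneg; intros; apply pow2_ge_0).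
  assert (HB : 0 <= B) by (apply fsum_nonneg; intros; apply pow2_ge_0).
  assert (HX : X <= sqrt A * sqrt B).
  { rewrite <- sqrt_mult by auto. apply Rle_trans with (Rabs X); [apply Rle_abs|].
    rewrite <- sqrt_Rsqr_abs. apply sqrt_le_1_alt. unfold Rsqr.
    pose proof (fsum_cauchy_schwarz n a b). fold A B X in H. simpl in H; lra. }
  unfold dist. rewrite E.
  change (fsum n (fun i => (x i - y i) ^ 2)) with A; change (fsum n (fun i => (y i - z i) ^ 2)) with B.
  pose proof (sqrt_pos A); pose proof (sqrt_pos B).
  apply sqrt_le_of_le_sqr; [lra|].
  replace ((sqrt A + sqrt B) ^ 2) with (sqrt A * sqrt A + sqrt B * sqrt B + 2 * (sqrt A * sqrt B))
    by ring.
  rewrite !sqrt_sqrt by auto. lra.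
Qed.

Definition compl {n} (A : pt n -> Prop) : pt n -> Prop := fun x => ~ A x.

Definition adherent {n} (A : pt n -> Prop) (z : pt n) : Prop :=
  forall eta, 0 < eta -> exists x, A x /\ dist x z <= eta.

Lemma le_of_le_plus_eps a b : (forall eta, 0 < eta -> a <= b + eta) -> a <= b.
Proof. intros H. destruct (Rle_dec a b) as [|Hab]; auto. specialize (H ((a - b) / 2)). lra. Qed.

Lemma adherent_mono {n} (A B : pt n -> Prop) z : subset A B -> adherent A z -> adherent B z.
Proof. intros HAB HA eta Heta. destruct (HA eta Heta) as [x [Hx Hxz]]. eauto. Qed.

Lemma dist_le_of_adherent_ball {n} (x z : pt n) r : adherent (ball x r) z -> dist x z <= r.
Proof.
  intros Hz. apply le_of_le_plus_eps. intros eta Heta.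
  destruct (Hz eta Heta) as [y [Hy Hyz]]. pose proof (dist_triangle x y z). unfold ball in Hy. lra.
Qed.

Lemma far_of_not_nbhd {n} (L : pt n -> Prop) t x :
  ~ nbhd L t x -> exists s, t < s /\ forall w, L w -> s <= dist x w.
Proof.
  intros H. unfold nbhd, pt_set_dist_le in H. apply not_all_ex_not in H as [s H].
  apply imply_to_and in H as [Hts Hno]. exists s. split; auto.
  intros w Hw. apply Rnot_lt_le. intros Hlt. apply Hno. eauto.
Qed.

Lemma dist_ge_of_adherent_compl_nbhd {n} (L : pt n -> Prop) t z w :
  adherent (compl (nbhd L t)) z -> L w -> t <= dist z w.
Proof.
  intros Hz Hw. apply le_of_le_plus_eps. intros eta Heta.
  destruct (Hz eta Heta) as [x [Hx Hxz]].
  destruct (far_of_not_nbhd L t x Hx) as [s [Hts Hs]]. specialize (Hs w Hw).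
  pose proof (dist_triangle x z w). lra.
Qed.

Lemma set_dist_gt_ball {n} (L : pt n -> Prop) t z a b :
  adherent (compl (nbhd L t)) z -> 0 <= a -> a + b < t -> set_dist_gt (ball z a) L b.
Proof.
  intros Hz Ha Hab. exists (t - a). split; [lra|]. intros y w Hy Hw.
  pose proof (dist_ge_of_adherent_compl_nbhd L t z w Hz Hw).
  pose proof (dist_triangle z y w). unfold ball in Hy. lra.
Qed.

Lemma ball_subset_ball {n} (x z : pt n) a r : dist x z + a <= r -> subset (ball z a) (ball x r).
Proof. intros H y Hy. pose proof (dist_triangle x z y). unfold ball in *. lra. Qed.

Lemma set_ext {n} (A B : pt n -> Prop) : (forall x, A x <-> B x) -> A = B.
Proof. intros H. apply functional_extensionality. intros x. apply propositional_extensionality, H. Qed.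

Lemma Borel_ext {n} (A B : pt n -> Prop) : Borel A -> (forall x, A x <-> B x) -> Borel B.
Proof. intros HA H. rewrite <- (set_ext A B H). exact HA. Qed.

Lemma Borel_empty {n} : Borel (fun _ : pt n => False).
Proof. apply Borel_open. intros x []. Qed.

Lemma Borel_setC {n} (A : pt n -> Prop) : Borel A -> Borel (compl A).
Proof. apply Borel_compl. Qed.

Lemma Borel_inter {n} (A B : pt n -> Prop) : Borel A -> Borel B -> Borel (inter A B).
Proof.
  intros HA HB.
  apply Borel_ext with
    (compl (fun x => exists k : nat, (if Nat.eqb k 0 then compl A else compl B) x)).
  - apply Borel_compl, Borel_union. intros [|k]; apply Borel_compl; auto.
  - intros x. unfold compl, inter. split.
    + intros H. split; apply NNPP; intros Hn; apply H; [exists 0%nat | exists 1%nat]; auto.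
    + intros [Ha Hb] [[|k] Hk]; auto.
Qed.

Lemma Borel_of_open_compl {n} (A : pt n -> Prop) : is_open (compl A) -> Borel A.
Proof.
  intros H. apply Borel_ext with (compl (compl A)); [apply Borel_compl, Borel_open, H|].
  intros x. unfold compl. split; [apply NNPP | auto].
Qed.

Lemma Borel_ball {n} (c : pt n) r : Borel (ball c r).
Proof.
  apply Borel_of_open_compl. intros x Hx. unfold compl, ball in Hx.
  exists ((dist c x - r) / 2). split; [lra|].
  intros y Hy Hcy. unfold ball in *. pose proof (dist_triangle c y x). rewrite (dist_sym y x) in *. lra.
Qed.

Lemma Borel_nbhd {n} (L : pt n -> Prop) t : Borel (nbhd L t).
Proof.
  apply Borel_of_open_compl. intros x Hx.
  destruct (far_of_not_nbhd L t x Hx) as [s [Hts Hs]].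
  exists ((s - t) / 2). split; [lra|]. intros y Hy Hny. unfold ball in Hy.
  destruct (Hny ((s + t) / 2)) as [w [Hw Hyw]]; [lra|].
  pose proof (Hs w Hw). pose proof (dist_triangle x y w). lra.
Qed.

Lemma Borel_coord_lt {n} (j : Fin.t n) m : Borel (fun x : pt n => x j < m).
Proof.
  apply Borel_open. intros x Hx. exists ((m - x j) / 2). split; [lra|].
  intros y Hy. pose proof (Rabs_coord_le_dist x y j). apply Rabs_le_inv in H. unfold ball in Hy. lra.
Qed.

Lemma bounded_subset {n} (A B : pt n -> Prop) : subset A B -> bounded B -> bounded A.
Proof. intros HAB [x0 [r H]]. exists x0, r. auto. Qed.

Lemma bounded_ball {n} (c : pt n) r : bounded (ball c r).
Proof. exists c, r. auto. Qed.

Fixpoint lsum (f : nat -> R) (l : list nat) : R :=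
  match l with nil => 0 | i :: l => f i + lsum f l end.

Lemma lsum_add f g l : lsum (fun i => f i + g i) l = lsum f l + lsum g l.
Proof. induction l; simpl; lra. Qed.

Lemma lsum_ext f g l : (forall i, f i = g i) -> lsum f l = lsum g l.
Proof. intros H. induction l; simpl; rewrite ?H, ?IHl; reflexivity. Qed.

Lemma lsum_gt f l a : l <> nil -> (forall i, In i l -> a < f i) -> INR (length l) * a < lsum f l.
Proof.
  induction l as [|i l IH]; intros Hne H; [congruence|].
  simpl length. rewrite S_INR. simpl lsum. pose proof (H i (or_introl eq_refl)).
  destruct l as [|i' l]; [simpl; lra|].
  assert (INR (length (i' :: l)) * a < lsum f (i' :: l)); [|lra].
  apply IH; [discriminate | intros; apply H; simpl; auto].
Qed.

Section Measure.

Context {n : nat} (mu : LFBMeasure n).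

Lemma meas_empty : mu (fun _ => False) = 0.
Proof.
  pose proof (meas_sigma_add n mu (fun _ _ => False) (fun _ => Borel_empty) (fun _ _ _ _ H _ => H))
    as Hsum.
  rewrite (set_ext (fun x => exists _ : nat, False) (fun _ => False)) in Hsum
    by (intros x; split; [intros [_ []] | intros []]).
  specialize (Hsum (bounded_subset _ _ (fun _ H => False_ind _ H) (bounded_ball (fun _ => 0) 0))).
  set (e := mu (fun _ => False)) in *.
  (* The partial sums are e * (k + 1) and must converge to e. *)
  destruct (Req_dec e 0) as [|He]; auto. exfalso.
  destruct (Hsum (Rabs e / 2)) as [k Hk]; [apply Rdiv_lt_0_compat; [apply Rabs_pos_lt|]; auto; lra|].
  specialize (Hk (S k) (le_S _ _ (le_n _))). rewrite sum_cte in Hk. unfold R_dist in Hk.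
  replace (e * INR (S (S k)) - e) with (e * INR (S k)) in Hk by (rewrite (S_INR (S k)); ring).
  rewrite Rabs_mult, (Rabs_right (INR (S k))) in Hk by (apply Rle_ge, pos_INR).
  pose proof (Rabs_pos_lt e He). rewrite S_INR in Hk. pose proof (pos_INR k). nra.
Qed.

Lemma meas_split (A B : pt n -> Prop) :
  Borel A -> Borel B -> bounded A -> mu A = mu (inter A B) + mu (inter A (compl B)).
Proof.
  intros HA HB HAb.
  set (F := fun k : nat => match k with
                           | O => inter A B
                           | 1%nat => inter A (compl B)
                           | _ => fun _ => False end).
  assert (HF : forall k, Borel (F k)).
  { intros [|[|k]]; simpl; auto using Borel_inter, Borel_setC, Borel_empty. }
  assert (HU : (fun x => exists k, F k x) = A).
  { apply set_ext. intros x. split.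
    - intros [[|[|k]] H]; simpl in H; unfold inter in H; tauto.
    - intros Hx. destruct (classic (B x)); [exists 0%nat | exists 1%nat]; split; auto. }
  assert (Hdisj : forall k l x, k <> l -> F k x -> F l x -> False).
  { intros [|[|k]] [|[|l]] x Hkl; simpl; unfold inter, compl; try tauto; lia. }
  pose proof (meas_sigma_add n mu F HF Hdisj) as Hsum. rewrite HU in Hsum.
  apply (uniqueness_sum (fun k => mu (F k))); [apply Hsum, HAb|].
  intros eps Heps. exists 1%nat. intros [|m] Hm; [lia|].
  replace (sum_f_R0 (fun k => mu (F k)) (S m)) with (mu (F 0%nat) + mu (F 1%nat)).
  - unfold R_dist. rewrite Rminus_diag, Rabs_R0. auto.
  - clear Hm. induction m as [|m IH]; [reflexivity|].
    rewrite tech5, <- IH. simpl F. rewrite meas_empty. ring.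
Qed.

Lemma meas_mono (A B : pt n -> Prop) :
  Borel A -> Borel B -> bounded B -> subset A B -> mu A <= mu B.
Proof.
  intros HA HB HBb HAB. rewrite (meas_split B A HB HA HBb).
  rewrite (set_ext (inter B A) A) by (intros x; unfold inter; split; [tauto | auto]).
  assert (0 <= mu (inter B (compl A))); [|lra].
  apply meas_nonneg; [auto using Borel_inter, Borel_setC|].
  apply bounded_subset with B; [intros x []; auto | auto].
Qed.

Lemma exists_of_meas_pos (A : pt n -> Prop) : 0 < mu A -> exists x, A x.
Proof.
  intros H. apply NNPP. intros Hno.
  rewrite (set_ext A (fun _ => False)), meas_empty in H; [lra|].
  intros x. split; [intros Hx; apply Hno; eauto | intros []].
Qed.

Lemma meas_split_inter (Q D B : pt n -> Prop) :
  Borel Q -> Borel D -> Borel B -> bounded Q ->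
  mu (inter Q B) = mu (inter (inter Q D) B) + mu (inter (inter Q (compl D)) B).
Proof.
  intros HQ HD HB HQb.
  rewrite (meas_split (inter Q B) D); auto using Borel_inter.
  - f_equal; f_equal; apply set_ext; intros x; unfold inter; tauto.
  - apply bounded_subset with Q; [intros x []|]; auto.
Qed.

(* Split Q along the first G_j: the surplus over c survives either on Q minus G_j,
   or on Q inside G_j with c - 1 in place of c. *)
Lemma measure_pigeonhole (G : nat -> pt n -> Prop) : (forall i, Borel (G i)) ->
  forall S Q c, NoDup S -> Borel Q -> bounded Q ->
  c * mu Q < lsum (fun i => mu (inter Q (G i))) S ->
  exists Q' S', Borel Q' /\ subset Q' Q /\ 0 < mu Q' /\ NoDup S' /\ incl S' S /\
    (forall i, In i S' -> subset Q' (G i)) /\ c < INR (length S').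
Proof.
  intros HG S. induction S as [|j S IH]; intros Q c HS HQ HQb Hc; simpl in Hc.
  - assert (Hpos : 0 < mu Q).
    { destruct (meas_nonneg n mu Q HQ HQb) as [|H0]; auto. rewrite <- H0 in Hc. lra. }
    exists Q, nil. split; [auto|]. split; [intros x Hx; exact Hx|]. split; [auto|].
    split; [constructor|]. split; [intros i []|]. split; [intros i []|]. simpl; nra.
  - apply NoDup_cons_iff in HS as [Hj HS].
    set (Q1 := inter Q (G j)); set (Q2 := inter Q (compl (G j))).
    assert (HQ1 : Borel Q1) by (apply Borel_inter; auto).
    assert (HQ2 : Borel Q2) by (apply Borel_inter; auto using Borel_setC).
    assert (HQ1b : bounded Q1) by (apply bounded_subset with Q; [intros x []|]; auto).
    assert (HQ2b : bounded Q2) by (apply bounded_subset with Q; [intros x []|]; auto).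
    assert (HmuQ : mu Q = mu Q1 + mu Q2) by (apply meas_split; auto).
    assert (Hsum : lsum (fun i => mu (inter Q (G i))) S =
                   lsum (fun i => mu (inter Q1 (G i))) S + lsum (fun i => mu (inter Q2 (G i))) S).
    { rewrite <- lsum_add. apply lsum_ext. intros i. apply meas_split_inter; auto. }
    change (inter Q (G j)) with Q1 in Hc. rewrite HmuQ, Rmult_plus_distr_l, Hsum in Hc.
    destruct (Rlt_dec ((c - 1) * mu Q1) (lsum (fun i => mu (inter Q1 (G i))) S)) as [H1|H1].
    + destruct (IH Q1 (c - 1) HS HQ1 HQ1b H1)
        as [Q' [S' [HQ' [HQ'1 [Hpos [HS' [Hincl [HG' Hlen]]]]]]]].
      exists Q', (j :: S'). repeat split; auto.
      * intros x Hx. apply HQ'1, Hx.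
      * constructor; auto.
      * intros i [<-|Hi]; [left | right; auto]; auto.
      * intros i [<-|Hi] x Hx; [apply HQ'1, Hx | apply HG'; auto].
      * simpl length. rewrite S_INR. lra.
    + apply Rnot_lt_le in H1. rewrite Rmult_minus_distr_r in H1.
      destruct (IH Q2 c HS HQ2 HQ2b ltac:(lra))
        as [Q' [S' [HQ' [HQ'2 [Hpos [HS' [Hincl [HG' Hlen]]]]]]]].
      exists Q', S'. repeat split; auto.
      * intros x Hx. apply HQ'2, Hx.
      * intros i Hi. right. auto.
Qed.

End Measure.

Definition in_box {n} (lo hi x : pt n) : Prop := forall j, lo j <= x j <= hi j.

Lemma dist_le_in_box {n} (lo hi x y : pt n) w :
  0 <= w -> (forall j, hi j - lo j <= w) -> in_box lo hi x -> in_box lo hi y ->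
  dist x y <= sqrt (INR n) * w.
Proof.
  intros Hw Hlh Hx Hy. apply dist_le_box; auto. intros j. apply Rabs_le.
  specialize (Hx j); specialize (Hy j); specialize (Hlh j). lra.
Qed.

Lemma nested_boxes_limit {n} (lo hi : nat -> pt n) :
  (forall k j, lo k j <= hi k j) ->
  (forall k j, lo k j <= lo (S k) j /\ hi (S k) j <= hi k j) ->
  exists z, forall k, in_box (lo k) (hi k) z.
Proof.
  intros Hlh Hstep.
  assert (Hnest : forall k m j, (k <= m)%nat -> lo k j <= lo m j /\ hi m j <= hi k j).
  { intros k m j Hkm. induction Hkm as [|m Hkm IH]; [lra|]. specialize (Hstep m j). lra. }
  assert (Hhi : forall k m j, lo m j <= hi k j).
  { intros k m j. destruct (Nat.le_ge_cases k m) as [Hkm|Hmk].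
    - specialize (Hnest k m j Hkm); specialize (Hlh m j). lra.
    - specialize (Hnest m k j Hmk); specialize (Hlh k j). lra. }
  assert (Hlub : forall j, {z | is_lub (fun r => exists k, r = lo k j) z}).
  { intros j. apply completeness.
    - exists (hi 0%nat j). intros r [m ->]. apply Hhi.
    - exists (lo 0%nat j). exists 0%nat. reflexivity. }
  exists (fun j => proj1_sig (Hlub j)). intros k j.
  destruct (Hlub j) as [z [Hub Hleast]]; simpl. split.
  - apply Hub. exists k. reflexivity.
  - apply Hleast. intros r [m ->]. apply Hhi.
Qed.

Lemma INR_lt_pow2 k : INR k < 2 ^ k.
Proof.
  induction k as [|k IH]; [simpl; lra|].
  rewrite S_INR. pose proof (pow_R1_Rle 2 k ltac:(lra)). simpl. lra.
Qed.

Lemma exists_div_pow2_le a eta : 0 < eta -> exists k, a / 2 ^ k <= eta.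
Proof.
  intros Heta. destruct (INR_archimed eta a Heta) as [k Hk]. exists k.
  pose proof (INR_lt_pow2 k). pose proof (pow_lt 2 k ltac:(lra)).
  apply Rmult_le_reg_r with (2 ^ k); auto.
  unfold Rdiv. rewrite Rmult_assoc, Rinv_l by lra. nra.
Qed.

Definition upd {n} (f : pt n) (j : Fin.t n) (v : R) : pt n :=
  fun j' => if Fin.eq_dec j j' then v else f j'.

Record cell (n : nat) := Cell { cell_set : pt n -> Prop; cell_lo : pt n; cell_hi : pt n }.
Arguments Cell {n}.
Arguments cell_set {n}.
Arguments cell_lo {n}.
Arguments cell_hi {n}.

Definition width {n} (c : cell n) (j : Fin.t n) : R := cell_hi c j - cell_lo c j.

Definition subcell {n} (c c' : cell n) : Prop :=
  subset (cell_set c') (cell_set c) /\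
  forall j, cell_lo c j <= cell_lo c' j /\ cell_hi c' j <= cell_hi c j.

Lemma subcell_trans {n} (c1 c2 c3 : cell n) : subcell c1 c2 -> subcell c2 c3 -> subcell c1 c3.
Proof.
  intros [H12 W12] [H23 W23]. split; [intros x Hx; auto|].
  intros j. specialize (W12 j); specialize (W23 j). lra.
Qed.

Lemma width_subcell {n} (c c' : cell n) j : subcell c c' -> width c' j <= width c j.
Proof. intros [_ W]. specialize (W j). unfold width. lra. Qed.

Fixpoint fin_enum (n : nat) : list (Fin.t n) :=
  match n with O => nil | S m => Fin.F1 :: map Fin.FS (fin_enum m) end.

Lemma fin_enum_complete n (j : Fin.t n) : In j (fin_enum n).
Proof. induction j; simpl; [left | right; apply in_map]; auto. Qed.

Section Bisection.

Context {n : nat} (mu : LFBMeasure n) (A : pt n -> Prop).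
Hypothesis HAb : bounded A.

Definition good_cell (c : cell n) : Prop :=
  Borel (cell_set c) /\ subset (cell_set c) A /\
  subset (cell_set c) (in_box (cell_lo c) (cell_hi c)) /\ 0 < mu (cell_set c).

Lemma good_cell_lo_le_hi c j : good_cell c -> cell_lo c j <= cell_hi c j.
Proof.
  intros (_ & _ & Hbox & Hpos). destruct (exists_of_meas_pos mu _ Hpos) as [x Hx].
  specialize (Hbox x Hx j). lra.
Qed.

Lemma good_cell_halve c j : good_cell c ->
  exists c', good_cell c' /\ subcell c c' /\ width c' j <= width c j / 2.
Proof.
  intros Hc. pose proof (good_cell_lo_le_hi c j Hc) as Hlh.
  destruct Hc as (HQ & HQA & Hbox & Hpos).
  destruct c as [Q lo hi]; simpl in *.
  set (m := (lo j + hi j) / 2).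
  set (H := fun x : pt n => x j < m).
  assert (HH : Borel H) by apply Borel_coord_lt.
  assert (HQb : bounded Q) by (apply bounded_subset with A; auto).
  pose proof (meas_split mu Q H HQ HH HQb) as Hsplit.
  unfold good_cell, subcell, width.
  destruct (Rlt_dec 0 (mu (inter Q H))) as [Hlow|Hlow].
  - exists (Cell (inter Q H) lo (upd hi j m)).
    unfold upd; simpl. split; [|split]; [split; [|split; [|split]] | split |].
    + apply Borel_inter; auto.
    + intros x [Hx _]; auto.
    + intros x [Hx Hxm] j'. specialize (Hbox x Hx j').
      destruct (Fin.eq_dec j j') as [<-|]; [unfold H in Hxm|]; lra.
    + auto.
    + intros x [Hx _]; auto.
    + intros j'. destruct (Fin.eq_dec j j') as [<-|]; unfold m; lra.
    + destruct (Fin.eq_dec j j) as [_|]; [unfold m; lra | congruence].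
  - assert (0 <= mu (inter Q H)).
    { apply meas_nonneg; [apply Borel_inter; auto|].
      apply bounded_subset with Q; [intros x []|]; auto. }
    exists (Cell (inter Q (compl H)) (upd lo j m) hi).
    unfold upd; simpl. split; [|split]; [split; [|split; [|split]] | split |].
    + apply Borel_inter; auto using Borel_setC.
    + intros x [Hx _]; auto.
    + intros x [Hx Hxm] j'. specialize (Hbox x Hx j').
      destruct (Fin.eq_dec j j') as [<-|]; [unfold compl, H in Hxm|]; lra.
    + lra.
    + intros x [Hx _]; auto.
    + intros j'. destruct (Fin.eq_dec j j') as [<-|]; unfold m; lra.
    + destruct (Fin.eq_dec j j) as [_|]; [unfold m; lra | congruence].
Qed.

Lemma good_cell_halve_list (js : list (Fin.t n)) c : good_cell c ->
  exists c', good_cell c' /\ subcell c c' /\ forall j, In j js -> width c' j <= width c j / 2.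
Proof.
  revert c. induction js as [|j js IH]; intros c Hc.
  - exists c. split; [auto|]. split; [|intros _ []].
    split; [intros x Hx; auto | intros j; lra].
  - destruct (good_cell_halve c j Hc) as [c1 (Hc1 & Hsub1 & Hw1)].
    destruct (IH c1 Hc1) as [c2 (Hc2 & Hsub2 & Hw2)].
    exists c2. split; [auto|]. split; [eapply subcell_trans; eauto|].
    intros j' [<-|Hj'].
    + pose proof (width_subcell c1 c2 j Hsub2). lra.
    + pose proof (width_subcell c c1 j' Hsub1). specialize (Hw2 j' Hj'). lra.
Qed.

Lemma good_cell_chain c0 : good_cell c0 ->
  exists s : nat -> cell n, s 0%nat = c0 /\ forall k,
    good_cell (s k) /\ subcell (s k) (s (S k)) /\ forall j, width (s (S k)) j <= width (s k) j / 2.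
Proof.
  intros H0.
  destruct (choice (fun c c' => good_cell c ->
      good_cell c' /\ subcell c c' /\ forall j, width c' j <= width c j / 2)) as [f Hf].
  { intros c. destruct (classic (good_cell c)) as [Hc|Hc].
    - destruct (good_cell_halve_list (fin_enum n) c Hc) as [c' (Hc' & Hsub & Hw)].
      exists c'. intros _. split; [auto|]. split; [auto|]. intros j. apply Hw, fin_enum_complete.
    - exists c. intros Hc'. contradiction. }
  assert (Hgood : forall k, good_cell (Nat.iter k f c0)).
  { induction k as [|k IH]; simpl; [auto | apply Hf, IH]. }
  exists (fun k => Nat.iter k f c0). split; [reflexivity|].
  intros k. split; [auto | apply (Hf _ (Hgood k))].
Qed.

Lemma exists_supp_adherent : Borel A -> 0 < mu A -> exists z, in_supp mu z /\ adherent A z.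
Proof.
  intros HA Hpos. destruct HAb as [x0 [r Hr]].
  assert (Hr0 : 0 <= r).
  { destruct (exists_of_meas_pos mu A Hpos) as [x Hx]. specialize (Hr x Hx).
    pose proof (sqrt_pos (fsum n (fun i => (x0 i - x i) ^ 2))). unfold dist in Hr. lra. }
  set (c0 := Cell A (fun j => x0 j - r) (fun j => x0 j + r)).
  assert (Hc0 : good_cell c0).
  { split; [auto|]. split; [intros x Hx; auto|]. split; [|auto].
    intros x Hx j. pose proof (Rabs_coord_le_dist x0 x j). specialize (Hr x Hx).
    apply Rabs_le_inv in H. simpl. lra. }
  destruct (good_cell_chain c0 Hc0) as [s [Hs0 Hs]].
  assert (Hwidth : forall k j, width (s k) j <= 2 * r / 2 ^ k).
  { induction k as [|k IH]; intros j.
    - rewrite Hs0. unfold width; simpl. lra.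
    - destruct (Hs k) as (_ & _ & Hw). specialize (Hw j). specialize (IH j).
      simpl pow. unfold Rdiv in *. rewrite Rinv_mult. lra. }
  destruct (nested_boxes_limit (fun k => cell_lo (s k)) (fun k => cell_hi (s k))) as [z Hz].
  { intros k j. apply good_cell_lo_le_hi, Hs. }
  { intros k j. apply Hs. }
  assert (Hclose : forall k x, cell_set (s k) x -> dist x z <= sqrt (INR n) * (2 * r / 2 ^ k)).
  { intros k x Hx. destruct (Hs k) as ((_ & _ & Hbox & _) & _).
    apply (dist_le_in_box (cell_lo (s k)) (cell_hi (s k))); [| apply Hwidth | apply Hbox, Hx | apply Hz].
    apply Rmult_le_pos; [lra | apply Rlt_le, Rinv_0_lt_compat, pow_lt; lra]. }
  assert (Hsmall : forall eta, 0 < eta -> exists k, sqrt (INR n) * (2 * r / 2 ^ k) <= eta).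
  { intros eta Heta. destruct (exists_div_pow2_le (sqrt (INR n) * (2 * r)) eta Heta) as [k Hk].
    exists k. unfold Rdiv in *. rewrite <- Rmult_assoc. auto. }
  exists z. split.
  - intros eta Heta. destruct (Hsmall eta Heta) as [k Hk].
    destruct (Hs k) as ((HQ & _ & _ & HQpos) & _).
    apply Rlt_le_trans with (mu (cell_set (s k))); auto.
    apply meas_mono; auto using Borel_ball, bounded_ball.
    intros x Hx. unfold ball. rewrite dist_sym. specialize (Hclose k x Hx). lra.
  - intros eta Heta. destruct (Hsmall eta Heta) as [k Hk].
    destruct (Hs k) as ((_ & HQA & _ & HQpos) & _).
    destruct (exists_of_meas_pos mu _ HQpos) as [x Hx].
    exists x. split; [auto|]. specialize (Hclose k x Hx). lra.
Qed.

End Bisection.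

Lemma C_Rpower_lt_1 C gamma q :
  0 < C -> 0 < gamma -> 0 < q -> q * Rpower C (1 / gamma) < 1 -> C * Rpower q gamma < 1.
Proof.
  intros HC Hg Hq Hlt. pose proof (exp_pos (1 / gamma * ln C)) as HP. fold (Rpower C (1 / gamma)) in HP.
  replace (C * Rpower q gamma) with (Rpower (q * Rpower C (1 / gamma)) gamma).
  - assert (H1 : Rpower 1 gamma = 1) by (unfold Rpower; rewrite ln_1, Rmult_0_r; apply exp_0).
    rewrite <- H1 at 2. apply Rlt_Rpower_l; [lra|]. split; [nra | auto].
  - rewrite <- Rpower_mult_distr, Rpower_mult by auto.
    replace (1 / gamma * gamma) with 1 by (field; lra). rewrite Rpower_1 by auto. ring.
Qed.

Lemma exists_decay_ratio C gamma alpha :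
  0 < C -> 0 < gamma -> 0 < alpha -> alpha < 1 / (2 * Rpower C (1 / gamma) + 1) ->
  exists q, 0 < q /\ 2 * alpha < q * (1 - alpha) /\ C * Rpower q gamma < 1.
Proof.
  intros HC Hg Ha Hlt. set (P := Rpower C (1 / gamma)).
  assert (HP : 0 < P) by apply exp_pos.
  assert (Ha1 : alpha * (2 * P + 1) < 1).
  { apply Rmult_lt_reg_r with (/ (2 * P + 1)); [apply Rinv_0_lt_compat; lra|].
    rewrite Rmult_assoc, Rinv_r, Rmult_1_r by lra. exact Hlt. }
  (* q is the midpoint of the interval (2 alpha / (1 - alpha), 1 / P), which is nonempty. *)
  exists ((2 * alpha / (1 - alpha) + / P) / 2).
  assert (Halpha : alpha < 1) by nra.
  assert (Hu : 2 * alpha / (1 - alpha) < / P).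
  { apply Rmult_lt_reg_r with ((1 - alpha) * P); [nra|].
    field_simplify; [nra | lra | lra]. }
  assert (0 < 2 * alpha / (1 - alpha)) by (apply Rdiv_lt_0_compat; lra).
  split; [lra|]. split.
  - replace (2 * alpha) with (2 * alpha / (1 - alpha) * (1 - alpha)) at 1 by (field; lra).
    apply Rmult_lt_compat_r; lra.
  - apply C_Rpower_lt_1; auto; [lra|]. fold P.
    apply Rmult_lt_reg_r with (/ P); [apply Rinv_0_lt_compat; lra|].
    rewrite Rmult_assoc, Rinv_r, Rmult_1_r, Rmult_1_l by lra. lra.
Qed.

Lemma decay_compl_nbhd {n} C gamma (mu : LFBMeasure n) rho0 (L : pt n -> Prop) x r t :
  decay_radius C gamma mu rho0 -> is_hyperplane L -> in_supp mu x -> 0 < r < rho0 -> 0 < t ->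
  (1 - C * Rpower (t / r) gamma) * mu (ball x r) < mu (inter (ball x r) (compl (nbhd L t))).
Proof.
  intros [_ Hdecay] HL Hx Hr Ht.
  pose proof (Hdecay L x r t HL Hx (proj1 Hr) (proj2 Hr) Ht).
  pose proof (meas_split mu (ball x r) (nbhd L t) (Borel_ball _ _) (Borel_nbhd _ _) (bounded_ball _ _)).
  rewrite Rmult_minus_distr_r, Rmult_1_l. lra.
Qed.

Theorem lemma3p2 :
  forall C gamma alpha : R,
    0 < C -> 0 < gamma -> 0 < alpha ->
    alpha < 1 / (2 * Rpower C (1 / gamma) + 1) ->
    exists eps : R, 0 < eps < 1 /\
      forall (n : nat) (mu : LFBMeasure n) (rho : R) (x1 : pt n) (N : nat)
             (L : nat -> pt n -> Prop),
        abs_decaying C gamma mu ->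
        0 < rho -> lt_decay_sup C gamma mu rho ->
        in_supp mu x1 ->
        (forall i, (i < N)%nat -> is_hyperplane (L i)) ->
        exists x2 : pt n,
          in_supp mu x2 /\
          subset (ball x2 (alpha * rho)) (ball x1 rho) /\
          exists idx : list nat,
            NoDup idx /\
            (forall i, In i idx ->
               (i < N)%nat /\ set_dist_gt (ball x2 (alpha * rho)) (L i) (alpha * rho)) /\
            eps * INR N <= INR (length idx).
Proof.
  intros C gamma alpha HC Hg Ha Hlt.
  destruct (exists_decay_ratio C gamma alpha HC Hg Ha Hlt) as [q (Hq & Hqa & Hdq)].
  pose proof (Rmult_lt_0_compat C (Rpower q gamma) HC (exp_pos _)).
  exists (1 - C * Rpower q gamma). split; [lra|].
  intros n mu rho x1 N L _ Hrho [rho0 [Hdec Hrr]] Hx1 HL.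
  assert (Halpha : alpha < 1) by nra.
  destruct N as [|N].
  { exists x1. split; [auto|]. split; [intros y Hy; unfold ball in *; nra|].
    exists nil. split; [constructor|]. split; [intros i []|]. simpl; lra. }
  set (r := (1 - alpha) * rho); set (t := q * r); set (G := fun i => compl (nbhd (L i) t)).
  assert (Hfrac : forall i, In i (seq 0 (S N)) ->
    (1 - C * Rpower q gamma) * mu (ball x1 r) < mu (inter (ball x1 r) (G i))).
  { intros i Hi. apply in_seq in Hi. replace q with (t / r) by (unfold t, r; field; nra).
    apply decay_compl_nbhd with rho0; auto; [apply HL; lia | unfold r; nra | unfold t, r; nra]. }
  pose proof (lsum_gt (fun i => mu (inter (ball x1 r) (G i))) (seq 0 (S N)) _ ltac:(discriminate) Hfrac)
    as Hsum. rewrite length_seq, <- Rmult_assoc in Hsum.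
  destruct (measure_pigeonhole mu G (fun i => Borel_setC _ (Borel_nbhd _ _)) (seq 0 (S N)) (ball x1 r)
              _ (seq_NoDup _ _) (Borel_ball _ _) (bounded_ball _ _) Hsum)
    as [Q [idx (HQ & HQB & HQpos & Hidx & Hincl & HSG & Hlen)]].
  destruct (exists_supp_adherent mu Q (bounded_subset _ _ HQB (bounded_ball _ _)) HQ HQpos)
    as [z [Hz Hadh]].
  exists z. split; [auto|]. split.
  { apply ball_subset_ball. pose proof (dist_le_of_adherent_ball x1 z r (adherent_mono _ _ _ HQB Hadh)).
    unfold r in *. lra. }
  exists idx. split; [auto|]. split; [|rewrite Rmult_comm; lra].
  intros i Hi. split; [apply Hincl, in_seq in Hi; lia|].
  apply set_dist_gt_ball with t; [apply (adherent_mono Q); [apply HSG|]; auto | nra | unfold t, r; nra].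
Qed.
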